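(* Let $W\subset\mathbb{P}^n$ be a smooth nondegenerate rational normal surface scroll of minimal degree $n-1$ (a ruled surface over $\mathbb{P}^1$ whose rulings are lines), and let $Y\subset W$ be a rational normal curve of degree $k$ with $2\le k\le n-1$. If there exists a linear subspace $\mathbb{P}^k\subset\mathbb{P}^n$ with $Y\subset W\cap\mathbb{P}^k$, then $Y=W\cap\mathbb{P}^k$ (set-theoretically). *)

(* Projective space P^n over an algebraically closed field K
   of characteristic 0 is modelled by nonzero row vectors in 'rV[K]_(n.+1);
   a projective subset is a predicate on vectors that is a cone (stable under
   nonzero scaling) not containing 0. *)
From mathcomp Require Import all_boot all_order all_algebra.
Set Implicit Arguments. Unset Strict Implicit. Unset Printing Implicit Defensive.
Import GRing.Theory.
Local Open Scope ring_scope.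

Section Defs.
Variable K : closedFieldType.

Definition std_scroll (a b : nat) (v : 'rV[K]_(a.+1 + b.+1)) : Prop :=
  exists s t lam mu : K, (s, t) != (0, 0) /\ (lam, mu) != (0, 0) /\
    v = row_mx (\row_(i < a.+1) (lam * s ^+ (a - i) * t ^+ i))
               (\row_(j < b.+1) (mu * s ^+ (b - j) * t ^+ j)).

Definition smooth_rn_surface_scroll (n : nat) (W : 'rV[K]_(n.+1) -> Prop) : Prop :=
  exists (a b : nat) (e : a.+1 + b.+1 = n.+1) (g : 'M[K]_(n.+1)),
    [/\ (1 <= a)%N, (1 <= b)%N, g \in unitmx &
      forall v, W v <-> exists w, std_scroll w /\ v = castmx (erefl 1%N, e) w *m g].

(* Y is a rational normal curve of degree k in P^n: the image of P^1 under
   [s:t] |-> [s^k : s^(k-1) t : ... : t^k] followed by an injective linear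
   map K^(k+1) -> K^(n+1) (so Y spans a P^k and is a standard RNC there). *)
Definition rational_normal_curve (n k : nat) (Y : 'rV[K]_(n.+1) -> Prop) : Prop :=
  exists M : 'M[K]_(k.+1, n.+1), row_free M /\
    forall v, Y v <-> exists c s t : K, [/\ c != 0, (s, t) != (0, 0) &
      v = c *: ((\row_(i < k.+1) (s ^+ (k - i) * t ^+ i)) *m M)].

Definition lin_span_pts (n m : nat) (A : 'M[K]_(m, n.+1)) (v : 'rV[K]_(n.+1)) : Prop :=
  (v <= A)%MS.

End Defs.

From mathcomp Require Import all_boot all_order all_algebra.
From mathcomp Require Import ring zify.
Set Implicit Arguments. Unset Strict Implicit. Unset Printing Implicit Defensive.
Import GRing.Theory.
Local Open Scope ring_scope.

(* Write the curve as [x |-> (1, x, ..., x^k) M] and, after the change of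
   coordinates [g], split the columns of [M] along the two blocks of the
   scroll [S(a,b)]; column [i] of a block is a polynomial of degree [<= k].
   That the curve lies on the scroll says that at every [x] both blocks are
   geometric progressions with one common ratio; writing this ratio in lowest
   terms as [q : p] gives columns [c q^(a-i) p^i] and [d q^(b-j) p^j].
   Since [M] has rank [k + 1], these columns span all polynomials of degree
   [<= k]; this forces [q], [p] to be independent linear forms and [c], [d]
   coprime of degrees [<= k - a], [<= k - b].  By rank, the [P^k] containing
   the curve is its span, so a point of the scroll in it is [w M] for a
   functional [w] whose values on the two blocks are again geometric, with
   some ratio [s : t]; then [w] kills [h f] for
   [h = t q - s p] and every [f] of degree [< k], which makes [w] an
   evaluation at the root of [h], i.e. a point of the curve. *)

Section FieldPoly.
Variable K : fieldType.
Implicit Types (p q c d r f g h : {poly K}) (s t : K).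

Definition geometric s t m (z : nat -> K) := forall i, (i < m)%N -> t * z i = s * z i.+1.

Lemma geometric_veronese s t lam m :
  geometric s t m (fun i => lam * s ^+ (m - i) * t ^+ i).
Proof. by move=> i im; rewrite -(subnSK im) !exprS; ring. Qed.

Lemma geometric_eq_veronese s t m (z : nat -> K) : (s, t) != (0, 0) ->
  geometric s t m z -> exists lam, forall i, (i <= m)%N -> z i = lam * s ^+ (m - i) * t ^+ i.
Proof.
move=> st zg; have [s0 | s_neq0] := eqVneq s 0.
  have t_neq0 : t != 0 by move: st; rewrite s0 xpair_eqE eqxx.
  have z0 i : (i < m)%N -> z i = 0.
    by move=> im; apply: (mulfI t_neq0); rewrite zg // s0 !mul0r mulr0.
  exists (z m / t ^+ m) => i; rewrite leq_eqVlt => /predU1P [-> | im].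
    by rewrite subnn expr0 mulr1 mulfVK // expf_neq0.
  by rewrite z0 // s0 expr0n subn_eq0 leqNgt im mulr0 mul0r.
exists (z 0%N / s ^+ m); elim=> [|i IHi] im; first by rewrite subn0 expr0 mulr1 mulfVK ?expf_neq0.
apply: (mulfI s_neq0); rewrite -zg // IHi ?(ltnW im) // -(subnSK im) !exprS; ring.
Qed.

Lemma coprimep_mul_eq c d f g : coprimep c d -> c * f = d * g ->
  exists e, f = d * e /\ g = c * e.
Proof.
move=> cd cf_dg; have [c0 | c_neq0] := eqVneq c 0.
  have d_neq0 : d != 0.
    by apply: contraTneq cd => d0; rewrite c0 d0 coprime0p eqp01.
  have : d %| c * f by rewrite cf_dg dvdp_mulr.
  rewrite Gauss_dvdpr 1?coprimep_sym // => /dvdpP [e fE].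
  exists e; split; first by rewrite fE mulrC.
  by apply: (mulfI d_neq0); rewrite -cf_dg fE c0 !mul0r mulr0.
have : c %| d * g by rewrite -cf_dg dvdp_mulr.
rewrite Gauss_dvdpr // => /dvdpP [e gE].
exists e; split; last by rewrite gE mulrC.
by apply: (mulfI c_neq0); rewrite cf_dg gE; ring.
Qed.

Lemma coprimep_geometric q p m (z : nat -> {poly K}) : coprimep q p -> q != 0 ->
  (forall i, (i < m)%N -> z i * p = z i.+1 * q) ->
  exists c, forall i, (i <= m)%N -> z i = c * q ^+ (m - i) * p ^+ i.
Proof.
move=> qp q_neq0 zpq.
have zq i : (i <= m)%N -> z i * q ^+ i = z 0%N * p ^+ i.
  elim: i => [|i IHi] im; first by rewrite !expr0 !mulr1.
  by rewrite exprS mulrA -zpq // mulrAC IHi ?(ltnW im) // -mulrA -exprSr.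
have : q ^+ m %| z 0%N * p ^+ m by rewrite -zq // dvdp_mull.
rewrite Gauss_dvdpl; last exact/coprimep_expl/coprimep_expr.
case/dvdpP => c z0E; exists c => i im.
apply: (@mulIf _ (q ^+ i)); first by rewrite expf_neq0.
by rewrite zq // z0E -!mulrA; congr (_ * _); rewrite mulrCA -exprD subnK // mulrC.
Qed.

Lemma size_mul_exp c r n : c != 0 -> r != 0 ->
  size (c * r ^+ n) = (size c + (size r).-1 * n)%N.
Proof.
move=> c_neq0 r_neq0; have rn_neq0 : r ^+ n != 0 by rewrite expf_neq0.
rewrite size_mul // -size_exp -[size (r ^+ n)]prednK ?size_poly_gt0 //.
by rewrite addnS.
Qed.

Lemma size_le2E h : (size h <= 2)%N -> h = (h`_0)%:P + h`_1 *: 'X.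
Proof.
move=> sh; apply/polyP => -[|[|i]]; rewrite coefD coefC coefZ coefX /=;
  rewrite ?mulr0 ?addr0 ?mulr1 ?add0r //.
by rewrite nth_default // (leq_trans sh).
Qed.

Lemma horner_size_le2 h x : (size h <= 2)%N -> h.[x] = h`_0 + h`_1 * x.
Proof. by move=> sh; rewrite {1}(size_le2E sh) !hornerE. Qed.

Lemma size_leq_mulX g n : (size (g * 'X)%R <= n.+1)%N -> (size g <= n)%N.
Proof. by have [-> | /size_mulX ->] := eqVneq g 0; rewrite ?size_poly0. Qed.

Lemma poly_split_coef0 g : g = (g`_0)%:P + drop_poly 1 g * 'X.
Proof.
rewrite -[LHS](poly_take_drop 1) expr1 [take_poly 1 g]size1_polyC ?size_take_poly //.
by rewrite coef_take_poly.
Qed.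

Definition comb_span c d a b f :=
  exists A B : {poly K}, [/\ (size A <= a)%N, (size B <= b)%N & f = c * A + d * B].

(* Comparing representations of [f] and of [f * 'X] shows that [A * 'X - A']
   is a multiple of [d]; moving this multiple from [A] to [B] lowers both
   degree bounds. *)
Lemma coprimep_comb_span_pred c d a b k : (k <= a + b)%N -> coprimep c d ->
  (size c <= k - a + 1)%N -> (size d <= k - b + 1)%N ->
  (forall f, (size f <= k.+1)%N -> comb_span c d a.+1 b.+1 f) ->
  forall f, (size f <= k)%N -> comb_span c d a b f.
Proof.
move=> kab cd sc sd span f sf.
have sc' : (size c <= b.+1)%N by lia.
have sd' : (size d <= a.+1)%N by lia.
have [A [B [sA sB fE]]] := span f (leq_trans sf (leqnSn _)).
have sfX : (size (f * 'X)%R <= k.+1)%N.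
  by rewrite (leq_trans (size_polyMleq _ _)) // size_polyX addn2.
have [A' [B' [sA' sB' fXE]]] := span _ sfX.
have : c * (A * 'X - A') = d * (B' - B * 'X).
  apply/eqP; rewrite -subr_eq0; apply/eqP.
  transitivity ((c * A + d * B) * 'X - (c * A' + d * B')); first ring.
  by rewrite -fE -fXE subrr.
case/(coprimep_mul_eq cd) => E [AE BE].
set E1 := drop_poly 1 E; have E_split := poly_split_coef0 E; rewrite -/E1 in E_split.
exists (A - d * E1), (B + c * E1); split.
- apply: size_leq_mulX.
  have -> : (A - d * E1) * 'X = A' + E`_0 *: d.
    have -> : (A - d * E1) * 'X = A' + (A * 'X - A') - d * (E1 * 'X) by ring.
    by rewrite AE {1}E_split -mul_polyC; ring.
  by rewrite (leq_trans (size_polyD _ _)) // geq_max sA' (leq_trans (size_scale_leq _ _)).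
- apply: size_leq_mulX.
  have -> : (B + c * E1) * 'X = B' - E`_0 *: c.
    have -> : (B + c * E1) * 'X = B' - (B' - B * 'X) + c * (E1 * 'X) by ring.
    by rewrite BE {1}E_split -mul_polyC; ring.
  rewrite (leq_trans (size_polyD _ _)) // geq_max sB' size_polyN.
  exact: leq_trans (size_scale_leq _ _) _.
- by rewrite fE; ring.
Qed.

Definition qp_span q p m g :=
  exists al : nat -> K, g = \sum_(i < m.+1) al i *: (q ^+ (m - i) * p ^+ i).

Lemma qp_spanD q p m f g : qp_span q p m f -> qp_span q p m g -> qp_span q p m (f + g).
Proof.
case=> al ->; case=> be ->; exists (fun i => al i + be i).
by rewrite -big_split; apply: eq_bigr => i _; rewrite scalerDl.
Qed.

Lemma qp_spanMq q p m f : qp_span q p m f -> qp_span q p m.+1 (q * f).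
Proof.
case=> al ->; exists (fun i => if (i <= m)%N then al i else 0).
rewrite [RHS]big_ord_recr /= ltnn scale0r addr0 mulr_sumr.
apply: eq_bigr => i _; rewrite /= -ltnS ltn_ord -scalerAr mulrA -exprS.
by rewrite subSn // -ltnS ltn_ord.
Qed.

Lemma qp_spanMp q p m f : qp_span q p m f -> qp_span q p m.+1 (p * f).
Proof.
case=> al ->; exists (fun i => if i is i'.+1 then al i' else 0).
rewrite [RHS]big_ord_recl /= scale0r add0r mulr_sumr.
by apply: eq_bigr => i _; rewrite /bump /= -scalerAr subSS mulrCA -exprS.
Qed.

Lemma qp_span_full q p al be ga de :
  1 = al *: q + be *: p -> 'X = ga *: q + de *: p ->
  forall m g, (size g <= m.+1)%N -> qp_span q p m g.
Proof.
rewrite -!mul_polyC => oneE XE; elim=> [|m IHm] g sg.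
  by exists (fun=> g`_0); rewrite big_ord1 mulr1 -mul_polyC mulr1 -size1_polyC.
have sg' : (size (drop_poly 1 g) <= m.+1)%N by rewrite size_drop_poly; lia.
have sg0 : (size (g`_0)%:P <= m.+1)%N by rewrite (leq_trans (size_polyC_leq1 _)).
have -> : g = q * (al *: (g`_0)%:P + ga *: drop_poly 1 g)
            + p * (be *: (g`_0)%:P + de *: drop_poly 1 g).
  rewrite {1}[g]poly_split_coef0 -[(g`_0)%:P]mul1r {1}oneE XE -!mul_polyC; ring.
apply: qp_spanD; [apply: qp_spanMq | apply: qp_spanMp]; apply: IHm;
  rewrite (leq_trans (size_polyD _ _)) // geq_max;
  by rewrite !(leq_trans (size_scale_leq _ _)).
Qed.

Lemma poly_spanning_card k N (g : nat -> {poly K}) :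
  (forall f, (size f <= k.+1)%N -> exists z : nat -> K, f = \sum_(i < N) z i *: g i) ->
  (k.+1 <= N)%N.
Proof.
move=> span; pose G : 'M[K]_(N, k.+1) := \matrix_(i, j) (g i)`_j.
suff : row_full G by rewrite /row_full => /eqP <-; exact: rank_leq_row.
rewrite -sub1mx; apply/row_subP => j; rewrite row1.
have [|z zE] := span 'X^j; first by rewrite size_polyXn.
suff -> : (delta_mx 0 j : 'rV[K]_(k.+1)) = (\row_i z i) *m G by exact: submxMl.
apply/rowP => j'; rewrite !mxE.
have := congr1 (fun f : {poly K} => f`_j') zE; rewrite coefXn coef_sum => ->.
by apply: eq_bigr => i _; rewrite !mxE coefZ.
Qed.

Section LinearPair.
Variables q p : {poly K}.
Hypotheses (sq : (size q <= 2)%N) (sp : (size p <= 2)%N).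
Let det := q`_0 * p`_1 - q`_1 * p`_0.

Lemma coprimep_linear_det : q != 0 -> coprimep q p ->
  (size p == 2%N) || (size q == 2%N) -> det != 0.
Proof.
move=> q_neq0 qp s2; apply/eqP => det0.
have coef1_neq0 r : size r = 2%N -> r`_1 != 0.
  by move=> sr; rewrite -[1%N]/(2.-1) -sr -lead_coefE lead_coef_eq0 -size_poly_eq0 sr.
have [q10 | q1_neq0] := eqVneq q`_1 0.
  have p1_neq0 : p`_1 != 0.
    by case/orP: s2 => /eqP /coef1_neq0 //; rewrite q10 eqxx.
  have /eqP : q`_0 * p`_1 = 0 by move: det0; rewrite /det q10 mul0r subr0.
  rewrite mulf_eq0 (negPf p1_neq0) orbF => /eqP q00.
  by move: q_neq0; rewrite (size_le2E sq) q00 q10 scale0r addr0 eqxx.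
have q_root : root q (- q`_0 / q`_1).
  by rewrite /root horner_size_le2 //; apply/eqP; field.
have := coprimep_root qp q_root; rewrite horner_size_le2 //.
apply/negP; rewrite negbK; apply/eqP.
by transitivity (- det / q`_1); [rewrite /det; field | rewrite det0 oppr0 mul0r].
Qed.

Lemma linear_det_basis : det != 0 ->
  exists al be ga de, 1 = al *: q + be *: p /\ 'X = ga *: q + de *: p.
Proof.
move=> det_neq0; exists (p`_1 / det), (- q`_1 / det), (- p`_0 / det), (q`_0 / det).
have coef_gt1 r i : (size r <= 2)%N -> r`_i.+2 = 0.
  by move=> sr; rewrite nth_default // (leq_trans sr).
rewrite /det in det_neq0 *; split; apply/polyP => -[|[|i]];
  by rewrite !(coefD, coefZ, coefC, coefX) /= ?coef_gt1 //; field.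
Qed.

Lemma linear_det_indep s t : det != 0 -> (s, t) != (0, 0) -> t *: q - s *: p != 0.
Proof.
move=> det_neq0 st; apply: contraNneq st => tq_sp.
have coef_eq j : t * q`_j = s * p`_j.
  apply/eqP; rewrite -subr_eq0.
  by have := congr1 (coefp j) tq_sp; rewrite /= coefB !coefZ coef0 => ->.
have t_det : t * det = 0 by rewrite /det mulrBr !mulrA !coef_eq; ring.
have s_det : s * det = 0.
  transitivity (q`_0 * (s * p`_1) - q`_1 * (s * p`_0)); first by rewrite /det; ring.
  by rewrite -!coef_eq; ring.
move/eqP: t_det; move/eqP: s_det; rewrite !mulf_eq0 (negPf det_neq0) !orbF.
by rewrite xpair_eqE => -> ->.
Qed.

End LinearPair.

Lemma size_exp_mul_le2 q p m i : (size q <= 2)%N -> (size p <= 2)%N ->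
  (size (q ^+ m * p ^+ i)%R <= (m + i).+1)%N.
Proof.
have size_exp r n : (size r <= 2)%N -> (size (r ^+ n) <= n.+1)%N.
  move=> sr; rewrite (leq_trans (size_poly_exp_leq _ _)) // ltnS -[leqRHS]mul1n leq_mul2r.
  by case: (size r) sr => [|[|[]]]; rewrite ?orbT.
move=> /(size_exp _ m) sq /(size_exp _ i) sp.
by have := size_polyMleq (q ^+ m) (p ^+ i); lia.
Qed.

Lemma ratio_step_mul c q p s t m j : (j < m)%N ->
  (t *: q - s *: p) * (c * q ^+ (m - j.+1) * p ^+ j) =
  t *: (c * q ^+ (m - j) * p ^+ j) - s *: (c * q ^+ (m - j.+1) * p ^+ j.+1).
Proof. by move=> jm; rewrite -(subnSK jm) -!mul_polyC !exprS; ring. Qed.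

Definition veronese k s t : 'rV[K]_k.+1 := \row_(i < k.+1) (s ^+ (k - i) * t ^+ i).

Definition coef_dot k (w : 'rV[K]_k.+1) f := \sum_(i < k.+1) w 0 i * f`_i.

Section CoefDot.
Variables (k : nat) (w : 'rV[K]_k.+1).

Lemma coef_dotD f g : coef_dot w (f + g) = coef_dot w f + coef_dot w g.
Proof. by rewrite -big_split; apply: eq_bigr => i _; rewrite coefD mulrDr. Qed.

Lemma coef_dotZ s f : coef_dot w (s *: f) = s * coef_dot w f.
Proof. by rewrite mulr_sumr; apply: eq_bigr => i _; rewrite coefZ mulrCA. Qed.

Lemma coef_dotB f g : coef_dot w (f - g) = coef_dot w f - coef_dot w g.
Proof. by rewrite coef_dotD -scaleN1r coef_dotZ mulN1r. Qed.

Lemma coef_dot_sum n (F : 'I_n -> {poly K}) :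
  coef_dot w (\sum_(i < n) F i) = \sum_(i < n) coef_dot w (F i).
Proof.
apply: (big_morph (coef_dot w)) => [f g|]; first exact: coef_dotD.
by rewrite /coef_dot big1 // => i _; rewrite coef0 mulr0.
Qed.

Lemma coef_dotXn j : (j <= k)%N -> coef_dot w 'X^j = w 0 (inord j).
Proof.
move=> jk; rewrite /coef_dot (bigD1 (inord j)) //= coefXn inordK // eqxx mulr1.
rewrite big1 ?addr0 // => i; rewrite coefXn -val_eqE /= inordK //.
by move/negPf->; rewrite mulr0.
Qed.

(* A functional killed by all multiples [h * 'X^i] of a nonzero linear form
   [h] is, up to scaling, evaluation at the root of [h] (possibly at infinity). *)
Lemma coef_dot_ann_veronese h : (size h <= 2)%N -> h != 0 -> w != 0 ->
  (forall i, (i < k)%N -> coef_dot w (h * 'X^i) = 0) ->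
  exists lam s t, [/\ lam != 0, (s, t) != (0, 0) & w = lam *: veronese k s t].
Proof.
move=> sh h_neq0 w_neq0 hw.
have st : (h`_1, - h`_0) != (0, 0).
  apply: contraNneq h_neq0 => -[h10 /eqP]; rewrite oppr_eq0 => /eqP h00; apply/eqP.
  by rewrite (size_le2E sh) h00 h10 scale0r addr0.
have /(geometric_eq_veronese st) [lam wE] : geometric h`_1 (- h`_0) k (fun i => w 0 (inord i)).
  move=> i ik; have := hw i ik.
  rewrite {1}(size_le2E sh) mulrDl mul_polyC -scalerAl -exprS coef_dotD !coef_dotZ.
  by rewrite !coef_dotXn ?(ltnW ik) // => /eqP; rewrite addr_eq0 mulNr => /eqP ->; rewrite opprK.
have wE' : w = lam *: veronese k h`_1 (- h`_0).
  by apply/rowP => i; rewrite !mxE -[i in LHS]inord_val wE ?mulrA // -ltnS.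
exists lam, h`_1, (- h`_0); split=> //.
by apply: contraNneq w_neq0 => lam0; rewrite wE' lam0 scale0r.
Qed.

End CoefDot.

Lemma coef_dot_qp_span_ann k (w : 'rV[K]_k.+1) q p c s t m A : (0 < m)%N ->
  geometric s t m (fun i => coef_dot w (c * q ^+ (m - i) * p ^+ i)) ->
  qp_span q p m.-1 A -> coef_dot w ((t *: q - s *: p) * (c * A)) = 0.
Proof.
move=> m_gt0 wg [al ->]; rewrite mulr_sumr mulr_sumr coef_dot_sum big1 // => j _.
have jm : (j < m)%N by rewrite -[m in (_ < m)%N]prednK.
have -> : (m.-1 - j = m - j.+1)%N by lia.
rewrite -!scalerAr coef_dotZ [c * _]mulrA ratio_step_mul //.
by rewrite coef_dotB !coef_dotZ wg // subrr mulr0.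
Qed.

End FieldPoly.

Section ClosedPoly.
Variable K : closedFieldType.
Implicit Types (p q c d u v f g : {poly K}).

(* For [f != 0], [f * 'X + 1] is nonconstant, yet it evaluates to [1] everywhere. *)
Lemma poly_horner_eq0 f : (forall x, f.[x] = 0) -> f = 0.
Proof.
move=> f0; apply/eqP; apply: contraT => f_neq0.
have /closed_rootP [x] : size (f * 'X + 1) != 1%N.
  by rewrite size_polyDl size_mulX // ?size_poly1 ?eqSS ?ltnS ?lt0n ?size_poly_eq0.
by rewrite /root !hornerE f0 mul0r add0r oner_eq0.
Qed.

Lemma proportional_horner_cross u v f g :
  (forall x, exists s t, [/\ (s, t) != (0, 0), t * u.[x] = s * v.[x] & t * f.[x] = s * g.[x]]) ->
  f * v = g * u.
Proof.
move=> uvfg; apply/eqP; rewrite -subr_eq0; apply/eqP; apply: poly_horner_eq0 => x.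
have [s [t [st uv fg]]] := uvfg x; rewrite !hornerE.
have /eqP : s * (f.[x] * v.[x] - g.[x] * u.[x]) = 0.
  by transitivity (f.[x] * (s * v.[x]) - (s * g.[x]) * u.[x]); [ring | rewrite -uv -fg; ring].
have /eqP : t * (f.[x] * v.[x] - g.[x] * u.[x]) = 0.
  by transitivity ((t * f.[x]) * v.[x] - g.[x] * (t * u.[x])); [ring | rewrite uv fg; ring].
rewrite !mulf_eq0 => /orP [/eqP t0 | /eqP //] /orP [/eqP s0 | /eqP //].
by move: st; rewrite s0 t0 eqxx.
Qed.

Section PointwiseGeometric.
Variables (a b k : nat) (X Y : nat -> {poly K}).
Hypothesis k_ge2 : (2 <= k)%N.
Hypothesis geom : forall x, exists s t, [/\ (s, t) != (0, 0),
  geometric s t a (fun i => (X i).[x]) & geometric s t b (fun j => (Y j).[x])].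
Hypothesis span : forall f, (size f <= k.+1)%N -> exists z1 z2 : nat -> K,
  f = \sum_(i < a.+1) z1 i *: X i + \sum_(j < b.+1) z2 j *: Y j.

Lemma exists_nonzero_column :
  (exists2 i, (i < a)%N & X i != 0) \/ (exists2 j, (j < b)%N & Y j != 0).
Proof.
have [/existsP [i Xi] | /existsPn X0] := boolP [exists i : 'I_a, X i != 0].
  by left; exists i.
have [/existsP [j Yj] | /existsPn Y0] := boolP [exists j : 'I_b, Y j != 0].
  by right; exists j.
suff : (k.+1 <= 2)%N by case: k k_ge2 => [|[|]].
apply: (@poly_spanning_card K k 2 (fun n => if n == 0%N then X a else Y b)) => f sf.
have [z1 [z2 ->]] := span sf; exists (fun n => if n == 0%N then z1 a else z2 b).
rewrite big_ord_recr [X in _ + X]big_ord_recr [RHS]big_ord_recr big_ord1 !big1 /=.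
- by rewrite !add0r.
- by move=> j _; move/negPn/eqP: (Y0 j) ->; rewrite scaler0.
- by move=> i _; move/negPn/eqP: (X0 i) ->; rewrite scaler0.
Qed.

(* At every [x] the common ratio [s : t] is [u(x) : v(x)] for one fixed pair
   [u, v] of consecutive columns; reducing [u : v] to lowest terms [q : p]
   makes the columns multiples of the monomials in [q] and [p]. *)
Lemma pointwise_geometric_factor : exists q p c d, [/\ coprimep q p, q != 0,
  forall i, (i <= a)%N -> X i = c * q ^+ (a - i) * p ^+ i &
  forall j, (j <= b)%N -> Y j = d * q ^+ (b - j) * p ^+ j].
Proof.
have [u [v [u_neq0 uv]]] : exists u v, u != 0 /\ forall x, exists s t,
    [/\ (s, t) != (0, 0), t * u.[x] = s * v.[x],
     geometric s t a (fun i => (X i).[x]) & geometric s t b (fun j => (Y j).[x])].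
  case: exists_nonzero_column => [[i ia Xi] | [j jb Yj]];
    [exists (X i), (X i.+1) | exists (Y j), (Y j.+1)]; split=> // x;
    have [s [t [st gX gY]]] := geom x; exists s, t; split; by [| apply: gX | apply: gY].
have crossX i : (i < a)%N -> X i * v = X i.+1 * u.
  move=> ia; apply: proportional_horner_cross => x.
  by have [s [t [st uvx gX _]]] := uv x; exists s, t; split=> //; apply: gX.
have crossY j : (j < b)%N -> Y j * v = Y j.+1 * u.
  move=> jb; apply: proportional_horner_cross => x.
  by have [s [t [st uvx _ gY]]] := uv x; exists s, t; split=> //; apply: gY.
set g := gcdp u v; set q := u %/ g; set p := v %/ g.
have g_neq0 : g != 0 by rewrite gcdp_eq0 negb_and u_neq0.
have uE : u = q * g by rewrite divpK // dvdp_gcdl.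
have vE : v = p * g by rewrite divpK // dvdp_gcdr.
have lowest (Z : nat -> {poly K}) m : (forall i, (i < m)%N -> Z i * v = Z i.+1 * u) ->
    forall i, (i < m)%N -> Z i * p = Z i.+1 * q.
  by move=> Zuv i im; apply: (mulIf g_neq0); rewrite -!mulrA -uE -vE Zuv.
have qp : coprimep q p by rewrite coprimep_div_gcd ?u_neq0.
have q_neq0 : q != 0 by apply: contraNneq u_neq0 => q0; rewrite uE q0 mul0r.
have [c Xc] := coprimep_geometric qp q_neq0 (lowest _ _ crossX).
have [d Yd] := coprimep_geometric qp q_neq0 (lowest _ _ crossY).
by exists q, p, c, d.
Qed.

End PointwiseGeometric.
End ClosedPoly.

Section ScrollColumns.
Variables (K : closedFieldType) (a b k : nat) (q p c d : {poly K}).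
Hypotheses (a_gt0 : (0 < a)%N) (b_gt0 : (0 < b)%N).
Hypotheses (k_ge2 : (2 <= k)%N) (k_le_ab : (k <= a + b)%N).
Hypotheses (qp : coprimep q p) (q_neq0 : q != 0).
Let X i := c * q ^+ (a - i) * p ^+ i.
Let Y j := d * q ^+ (b - j) * p ^+ j.
Hypothesis sizeX : forall i, (i <= a)%N -> (size (X i) <= k.+1)%N.
Hypothesis sizeY : forall j, (j <= b)%N -> (size (Y j) <= k.+1)%N.
Hypothesis span : forall f : {poly K}, (size f <= k.+1)%N -> exists z1 z2 : nat -> K,
  f = \sum_(i < a.+1) z1 i *: X i + \sum_(j < b.+1) z2 j *: Y j.

Lemma cofactors_neq0 : (c != 0) || (d != 0).
Proof.
apply: contraT; rewrite negb_or !negbK => /andP [/eqP c0 /eqP d0].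
suff : (k.+1 <= 0)%N by [].
apply: (@poly_spanning_card K k 0 (fun=> 0)) => f /span [z1 [z2 ->]].
by exists z1; rewrite big_ord0 !big1 ?addr0 // => i _; rewrite /X /Y (c0, d0) !mul0r scaler0.
Qed.

Lemma span_card_c : d = 0 -> (k <= a)%N.
Proof.
move=> d0; apply: (@poly_spanning_card K k a.+1 X) => f /span [z1 [z2 ->]].
by exists z1; rewrite [X in _ + X]big1 ?addr0 // => j _; rewrite /Y d0 !mul0r scaler0.
Qed.

Lemma span_card_d : c = 0 -> (k <= b)%N.
Proof.
move=> c0; apply: (@poly_spanning_card K k b.+1 Y) => f /span [z1 [z2 ->]].
by exists z2; rewrite big1 ?add0r // => i _; rewrite /X c0 !mul0r scaler0.
Qed.

Lemma span_card_const : (size c <= 1)%N -> (size d <= 1)%N -> a = b -> (k <= a)%N.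
Proof.
move=> sc sd ab; subst b.
apply: (@poly_spanning_card K k a.+1 (fun i => q ^+ (a - i) * p ^+ i)) => f /span [z1 [z2 ->]].
exists (fun i => z1 i * c`_0 + z2 i * d`_0); rewrite -big_split; apply: eq_bigr => i _ /=.
rewrite /X /Y [c in LHS]size1_polyC // [d in LHS]size1_polyC //.
by rewrite -!mulrA !mul_polyC !scalerA scalerDl.
Qed.

Lemma size_ratio_le2 r :
  (size (c * r ^+ a)%R <= k.+1)%N -> (size (d * r ^+ b)%R <= k.+1)%N -> (size r <= 2)%N.
Proof.
move=> scr sdr; rewrite leqNgt; apply/negP => r_gt2.
have r_neq0 : r != 0 by rewrite -size_poly_gt0 (leq_trans _ r_gt2).
have bound e n : e != 0 -> (size (e * r ^+ n)%R <= k.+1)%N -> (size e + 2 * n <= k.+1)%N.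
  move=> e_neq0; rewrite size_mul_exp //; apply: leq_trans.
  by rewrite leq_add2l leq_mul2r -ltnS prednK ?r_gt2 ?orbT // (leq_trans _ r_gt2).
have [c0 | c_neq0] := eqVneq c 0.
  have d_neq0 : d != 0 by have := cofactors_neq0; rewrite c0 eqxx.
  have := bound _ _ d_neq0 sdr; have := span_card_d c0.
  by rewrite -size_poly_gt0 in d_neq0; lia.
have [d0 | d_neq0] := eqVneq d 0.
  have := bound _ _ c_neq0 scr; have := span_card_c d0.
  by rewrite -size_poly_gt0 in c_neq0; lia.
have := bound _ _ c_neq0 scr; have := bound _ _ d_neq0 sdr.
move: c_neq0 d_neq0; rewrite -!size_poly_gt0 => c_gt0 d_gt0 bd bc.
have : (k <= a)%N by apply: span_card_const; lia.
lia.
Qed.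

Lemma size_q_le2 : (size q <= 2)%N.
Proof.
apply: size_ratio_le2; [move: (sizeX (leq0n a)) | move: (sizeY (leq0n b))];
  by rewrite /X /Y subn0 expr0 mulr1.
Qed.

Lemma size_p_le2 : (size p <= 2)%N.
Proof.
apply: size_ratio_le2; [move: (sizeX (leqnn a)) | move: (sizeY (leqnn b))];
  by rewrite /X /Y subnn expr0 mulr1.
Qed.

Lemma size_ratio_eq2 : (size p == 2%N) || (size q == 2%N).
Proof.
apply: contraT; rewrite negb_or => /andP [sp sq].
have {}sp : (size p <= 1)%N by move: sp size_p_le2; case: (size p) => [|[|[|]]].
have {}sq : (size q <= 1)%N by move: sq size_q_le2; case: (size q) => [|[|[|]]].
suff : (k.+1 <= 2)%N by lia.
apply: (@poly_spanning_card K k 2 (fun n => if n == 0%N then c else d)) => f /span [z1 [z2 ->]].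
exists (fun n => if n == 0%N then \sum_(i < a.+1) z1 i * (q`_0 ^+ (a - i) * p`_0 ^+ i)
                 else \sum_(j < b.+1) z2 j * (q`_0 ^+ (b - j) * p`_0 ^+ j)).
rewrite [RHS]big_ord_recr big_ord1 /= !scaler_suml /X /Y.
rewrite [p in LHS]size1_polyC // [q in LHS]size1_polyC //.
by congr (_ + _); apply: eq_bigr => i _;
  rewrite -!polyC_exp -mulrA -polyCM mulrC mul_polyC scalerA.
Qed.

Lemma coprimep_cofactors : coprimep c d.
Proof.
apply: Pdiv.ClosedField.root_coprimep => x cx; apply/negP => /eqP dx.
have [|z1 [z2]] := span (f := 1); first by rewrite size_poly1.
move/(congr1 (horner^~ x)); rewrite hornerC hornerD !horner_sum !big1 ?addr0.
- by move/eqP; rewrite oner_eq0.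
- by move=> j _; rewrite hornerZ !hornerM dx !mul0r mulr0.
- by move=> i _; rewrite hornerZ !hornerM (eqP cx) !mul0r mulr0.
Qed.

Lemma size_cofactor_le (e : {poly K}) n : (size (e * q ^+ n)%R <= k.+1)%N ->
  (size (e * p ^+ n)%R <= k.+1)%N -> (size e <= k - n + 1)%N.
Proof.
have [-> | e_neq0] := eqVneq e 0; first by rewrite size_poly0.
have size_lin (r : {poly K}) : size r = 2%N -> size (e * r ^+ n) = (size e + n)%N.
  by move=> sr; rewrite size_mul_exp // ?sr ?mul1n // -size_poly_gt0 sr.
by case/orP: size_ratio_eq2 => /eqP /size_lin ->; lia.
Qed.

Lemma comb_span_full (f : {poly K}) : (size f <= k.+1)%N -> comb_span c d a.+1 b.+1 f.
Proof.
case/span => z1 [z2 ->].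
have size_comb m (z : nat -> K) :
    (size (\sum_(i < m.+1) z i *: (q ^+ (m - i) * p ^+ i))%R <= m.+1)%N.
  apply: leq_trans (size_sum _ _ _) _; apply/bigmax_leqP => i _.
  apply: leq_trans (size_scale_leq _ _) _.
  by rewrite (leq_trans (size_exp_mul_le2 _ _ size_q_le2 size_p_le2)) // subnK // -ltnS.
exists (\sum_(i < a.+1) z1 i *: (q ^+ (a - i) * p ^+ i)),
       (\sum_(j < b.+1) z2 j *: (q ^+ (b - j) * p ^+ j)); split=> //.
by rewrite !mulr_sumr; congr (_ + _); apply: eq_bigr => i _; rewrite -scalerAr mulrA.
Qed.

(* [h := t q - s p] is a nonzero linear form, and every [h * 'X^i] with
   [i < k] is a combination of the [t X_i - s X_(i+1)] and
   [t Y_j - s Y_(j+1)], all of which [w] annihilates. *)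
Lemma scroll_ratio_veronese (w : 'rV[K]_k.+1) s t : w != 0 -> (s, t) != (0, 0) ->
  geometric s t a (fun i => coef_dot w (X i)) -> geometric s t b (fun j => coef_dot w (Y j)) ->
  exists lam s' t', [/\ lam != 0, (s', t') != (0, 0) & w = lam *: veronese k s' t'].
Proof.
move=> w_neq0 st wX wY.
have det_neq0 := coprimep_linear_det size_q_le2 size_p_le2 q_neq0 qp size_ratio_eq2.
have [al [be [ga [de [oneE XE]]]]] := linear_det_basis size_q_le2 size_p_le2 det_neq0.
have span_qp := qp_span_full oneE XE.
have size_c : (size c <= k - a + 1)%N.
  by apply: size_cofactor_le; [move: (sizeX (leq0n a)) | move: (sizeX (leqnn a))];
    rewrite /X ?subn0 ?subnn expr0 mulr1.
have size_d : (size d <= k - b + 1)%N.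
  by apply: size_cofactor_le; [move: (sizeY (leq0n b)) | move: (sizeY (leqnn b))];
    rewrite /Y ?subn0 ?subnn expr0 mulr1.
apply: (coef_dot_ann_veronese (h := t *: q - s *: p)) => //.
- by rewrite (leq_trans (size_polyD _ _)) // geq_max size_polyN
    !(leq_trans (size_scale_leq _ _)) ?size_q_le2 ?size_p_le2.
- exact: linear_det_indep det_neq0 st.
move=> i ik.
have [|A [B [sA sB ->]]] :=
  coprimep_comb_span_pred k_le_ab coprimep_cofactors size_c size_d comb_span_full (f := 'X^i).
  by rewrite size_polyXn.
have qA : qp_span q p a.-1 A by apply: span_qp; rewrite prednK.
have qB : qp_span q p b.-1 B by apply: span_qp; rewrite prednK.
rewrite mulrDr coef_dotD (coef_dot_qp_span_ann a_gt0 wX qA).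
by rewrite (coef_dot_qp_span_ann b_gt0 wY qB) addr0.
Qed.

End ScrollColumns.

Section ColumnPolys.
Variables (K : fieldType) (k m : nat).
Implicit Types (M : 'M[K]_(k.+1, m.+1)) (w : 'rV[K]_k.+1).

(* Row [r] of [M] is paired with [s^(k-r) t^r], so a point of the curve
   [x |-> veronese k 1 x *m M] has coordinates the column polynomials at [x]. *)
Definition col_poly M (j : nat) : {poly K} := \poly_(r < k.+1) M (inord r) (inord j).

Lemma size_col_poly M j : (size (col_poly M j) <= k.+1)%N.
Proof. exact: size_poly. Qed.

Lemma horner_col_poly M x j : (veronese k 1 x *m M) 0 (inord j) = (col_poly M j).[x].
Proof.
rewrite mxE horner_poly; apply: eq_bigr => r _.
by rewrite mxE expr1n mul1r mulrC inord_val.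
Qed.

Lemma coef_dot_col_poly M w j : (w *m M) 0 (inord j) = coef_dot w (col_poly M j).
Proof. by rewrite mxE; apply: eq_bigr => r _; rewrite coef_poly ltn_ord inord_val. Qed.

Lemma row_free_col_poly_span M : row_free M ->
  forall f : {poly K}, (size f <= k.+1)%N ->
  exists z : nat -> K, f = \sum_(j < m.+1) z j *: col_poly M j.
Proof.
move=> M_free f sf.
have /submxP [z fE] : (\row_(i < k.+1) f`_i <= M^T)%MS.
  by apply: submx_full; rewrite /row_full mxrank_tr.
exists (fun j => z 0 (inord j)); apply/polyP => i; rewrite coef_sum.
have [ik | ki] := ltnP i k.+1; last first.
  rewrite nth_default ?(leq_trans sf) // big1 // => j _.
  by rewrite coefZ coef_poly ltnNge ki mulr0.
have := congr1 (fun r : 'rV_k.+1 => r 0 (Ordinal ik)) fE; rewrite !mxE /= => ->.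
apply: eq_bigr => j _; rewrite coefZ coef_poly ik !mxE inord_val.
by congr (_ * M _ _); apply: val_inj; rewrite /= inordK.
Qed.

End ColumnPolys.

Section BlockColumnPolys.
Variables (K : fieldType) (k a b : nat) (M : 'M[K]_(k.+1, a.+1 + b.+1)).

Lemma col_poly_lsub i : (i <= a)%N -> col_poly (lsubmx M) i = col_poly M i.
Proof.
move=> ia; apply/polyP => r; rewrite !coef_poly; case: ltnP => // _.
rewrite mxE; congr (M _ _); apply: val_inj; rewrite /= !inordK //.
by change (i < a.+1 + b.+1)%N; lia.
Qed.

Lemma col_poly_rsub j : (j <= b)%N -> col_poly (rsubmx M) j = col_poly M (a.+1 + j).
Proof.
move=> jb; apply/polyP => r; rewrite !coef_poly; case: ltnP => // _.
rewrite mxE; congr (M _ _); apply: val_inj; rewrite /= !inordK //.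
by change (a.+1 + j < a.+1 + b.+1)%N; lia.
Qed.

End BlockColumnPolys.

Lemma submx_veronese (K : closedFieldType) k n r (M : 'M[K]_(k.+1, n.+1)) (A : 'M_(r, n.+1)) :
  (forall x, (veronese k 1 x *m M <= A)%MS) -> (M <= A)%MS.
Proof.
move=> MA; rewrite submxE; apply/eqP/matrixP => i j; rewrite [RHS]mxE.
have : col_poly (M *m cokermx A) j = 0.
  apply: poly_horner_eq0 => x; rewrite -horner_col_poly mulmxA.
  by move: (MA x); rewrite submxE => /eqP ->; rewrite mxE.
by move/(congr1 (coefp i)); rewrite /= coef0 coef_poly ltn_ord !inord_val.
Qed.

Lemma std_scroll_geometric (K : closedFieldType) a b (u : 'rV[K]_(a.+1 + b.+1)) :
  std_scroll u -> exists s t, [/\ (s, t) != (0, 0),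
    geometric s t a (fun i => lsubmx u 0 (inord i)) &
    geometric s t b (fun j => rsubmx u 0 (inord j))].
Proof.
rewrite /std_scroll => -[s [t [lam [mu [st [_ ->]]]]]]; exists s, t; rewrite row_mxKl row_mxKr.
by split=> // i ia; rewrite !mxE !inordK ?ltnS ?(ltnW ia) //; apply: geometric_veronese.
Qed.

Lemma std_scroll_veronese (K : closedFieldType) a b k (M : 'M[K]_(k.+1, a.+1 + b.+1)) :
  (0 < a)%N -> (0 < b)%N -> (2 <= k)%N -> (k <= a + b)%N -> row_free M ->
  (forall x, std_scroll (veronese k 1 x *m M)) ->
  forall w, w != 0 -> std_scroll (w *m M) ->
  exists lam s t, [/\ lam != 0, (s, t) != (0, 0) & w = lam *: veronese k s t].
Proof.
move=> a_gt0 b_gt0 k_ge2 k_le_ab M_free curve w w_neq0 /std_scroll_geometric [s [t [st wX wY]]].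
set X := col_poly (lsubmx M); set Y := col_poly (rsubmx M).
have span (f : {poly K}) : (size f <= k.+1)%N -> exists z1 z2 : nat -> K,
    f = \sum_(i < a.+1) z1 i *: X i + \sum_(j < b.+1) z2 j *: Y j.
  move=> sf; have [z ->] := row_free_col_poly_span M_free sf.
  exists z, (fun j => z (a.+1 + j)%N); rewrite -[(a + b.+1).+1]/(a.+1 + b.+1)%N big_split_ord /=.
  by congr (_ + _); apply: eq_bigr => i _; rewrite /X /Y ?col_poly_lsub ?col_poly_rsub // -ltnS.
have geom x : exists s t, [/\ (s, t) != (0, 0),
    geometric s t a (fun i => (X i).[x]) & geometric s t b (fun j => (Y j).[x])].
  have [s' [t' [st' gX gY]]] := std_scroll_geometric (curve x).
  by exists s', t'; rewrite -!mulmx_lsub -!mulmx_rsub in gX gY; split=> // i im;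
    rewrite -!horner_col_poly; [apply: gX | apply: gY].
have [q [p [c [d [qp q_neq0 Xc Yd]]]]] := pointwise_geometric_factor k_ge2 geom span.
have sizeX i : (i <= a)%N -> (size (c * q ^+ (a - i) * p ^+ i)%R <= k.+1)%N.
  by move=> ia; rewrite -Xc // size_col_poly.
have sizeY j : (j <= b)%N -> (size (d * q ^+ (b - j) * p ^+ j)%R <= k.+1)%N.
  by move=> jb; rewrite -Yd // size_col_poly.
apply: (scroll_ratio_veronese a_gt0 b_gt0 k_ge2 k_le_ab qp q_neq0 sizeX sizeY _ w_neq0 st).
- move=> f /span [z1 [z2 ->]]; exists z1, z2.
  by congr (_ + _); apply: eq_bigr => i _; rewrite (Xc, Yd) // -ltnS.
- move=> i ia; rewrite -!Xc ?(ltnW ia) // -!coef_dot_col_poly !mulmx_lsub; exact: wX.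
- move=> j jb; rewrite -!Yd ?(ltnW jb) // -!coef_dot_col_poly !mulmx_rsub; exact: wY.
Qed.

Lemma scroll_veronese (K : closedFieldType) n k (W : 'rV[K]_n.+1 -> Prop)
    (M : 'M[K]_(k.+1, n.+1)) :
  smooth_rn_surface_scroll W -> (2 <= k <= n.-1)%N -> row_free M ->
  (forall x, W (veronese k 1 x *m M)) ->
  forall w, w != 0 -> W (w *m M) ->
  exists lam s t, [/\ lam != 0, (s, t) != (0, 0) & w = lam *: veronese k s t].
Proof.
case=> a [b [e [g [a_gt0 b_gt0 g_unit HW]]]] /andP [k_ge2 k_le] M_free curve.
have [n_eq] : n.+1 = (a + b.+1).+1 by rewrite -e.
subst n; rewrite (eq_irrelevance e erefl) in HW.
have std u : W (u *m M) -> std_scroll (u *m (M *m invmx g)).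
  by case/HW=> u' [u'_scroll uM]; rewrite mulmxA uM mulmxK // castmx_id.
move=> w w_neq0 /std; apply: std_scroll_veronese => //.
- by move: k_le; rewrite addnS.
- by rewrite /row_free mxrankMfree ?row_free_unit ?unitmx_inv.
- by move=> x; apply/std/curve.
Qed.

Theorem lemma2p11 (K : closedFieldType) (Kchar0 : [pchar K] =i pred0)
  (n k : nat) (W Y : 'rV[K]_(n.+1) -> Prop)
  (HW : smooth_rn_surface_scroll W)
  (HY : rational_normal_curve k Y)
  (Hk : (2 <= k <= n.-1)%N)
  (YW : forall v, Y v -> W v)
  (A : 'M[K]_(k.+1, n.+1)) (HA : row_free A)
  (YL : forall v, Y v -> lin_span_pts A v) :
  forall v : 'rV[K]_(n.+1), v != 0 -> (Y v <-> (W v /\ lin_span_pts A v)).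
Proof.
move=> v v_neq0; split=> [Yv | [Wv Av]]; first by split; [exact: YW | exact: YL].
have [M [M_free YM]] := HY.
have Y_veronese x : Y (veronese k 1 x *m M).
  by apply/YM; exists 1, 1, x; rewrite scale1r oner_eq0 xpair_eqE oner_eq0.
have MA : (M <= A)%MS by apply: submx_veronese => x; apply/YL/Y_veronese.
have AM : (A <= M)%MS by rewrite -(mxrank_leqif_sup MA).2 (eqP M_free) (eqP HA).
have /submxP [w vE] := submx_trans Av AM.
have w_neq0 : w != 0 by apply: contraNneq v_neq0 => w0; rewrite vE w0 mul0mx.
have [|lam [s [t [lam_neq0 st wE]]]] :=
  scroll_veronese HW Hk M_free (fun x => YW _ (Y_veronese x)) w_neq0; first by rewrite -vE.
by apply/YM; exists lam, s, t; rewrite vE wE -scalemxAl.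
Qed.
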